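(* For $x\in(0,1/4]$ and integer $n\ge1$, let $S_n(x)=\sum_{k=0}^{n-1}\frac{(1-x)^k}{n-k}$. Then $$x\,S_n(x)\le\frac{7\ln(1/x)}{n}.$$ *)

From Stdlib Require Import Reals Lra Lia.
Open Scope R_scope.

Fixpoint sum_upto (f : nat -> R) (m : nat) : R :=
  match m with
  | O => 0
  | S m' => sum_upto f m' + f m'
  end.

Definition S_n (n : nat) (x : R) : R :=
  sum_upto (fun k => (1 - x) ^ k / INR (n - k)) n.

(** The sum obeys S_(n+1) = 1/(n+1) + (1-x) S_n and is dominated by the
    harmonic number, so S_n <= 1 + ln n.  While n x <= 2 this already gives
    x S_n <= (2/n) (1 + ln (2/x)), which is at most 7 ln(1/x) / n because
    ln(1/x) >= ln 4.  Beyond that threshold the bound C/n (with C = 7 ln(1/x))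
    propagates through the recurrence: the fresh term x/(n+1) is absorbed by
    the contraction factor 1-x as soon as (n+1) x >= 2 and C >= 2. *)

From Stdlib Require Import Reals Lra Lia.
Open Scope R_scope.

Lemma sum_upto_ext (f g : nat -> R) (m : nat) :
  (forall k, f k = g k) -> sum_upto f m = sum_upto g m.
Proof. intros Hfg; induction m as [|m IH]; simpl; [lra|]. now rewrite IH, Hfg. Qed.

Lemma sum_upto_scal (f : nat -> R) (c : R) (m : nat) :
  sum_upto (fun k => c * f k) m = c * sum_upto f m.
Proof. induction m as [|m IH]; simpl; [lra|]. rewrite IH; ring. Qed.

Lemma sum_upto_shift (f : nat -> R) (m : nat) :
  sum_upto f (S m) = f 0%nat + sum_upto (fun k => f (S k)) m.
Proof. induction m as [|m IH]; simpl in *; [lra|]. rewrite IH; ring. Qed.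

Lemma ln_le (a b : R) : 0 < a -> a <= b -> ln a <= ln b.
Proof.
  intros Ha [Hab | <-]; [|lra].
  now left; apply ln_increasing.
Qed.

Lemma ln_le_sub_1 (y : R) : 0 < y -> ln y <= y - 1.
Proof.
  intros Hy. pose proof (exp_ineq1_le (ln y)) as Hexp.
  rewrite exp_ln in Hexp; lra.
Qed.

Lemma inv_succ_le_ln_succ_sub_ln (a : R) : 0 < a -> / (a + 1) <= ln (a + 1) - ln a.
Proof.
  intros Ha.
  pose proof (ln_le_sub_1 (a / (a + 1)) ltac:(apply Rdiv_lt_0_compat; lra)) as Hln.
  unfold Rdiv in Hln.
  rewrite ln_mult, ln_Rinv in Hln by (try apply Rinv_0_lt_compat; lra).
  replace (a * / (a + 1) - 1) with (- / (a + 1)) in Hln by (field; lra).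
  lra.
Qed.

Lemma S_n_S (n : nat) (x : R) : S_n (S n) x = / INR (S n) + (1 - x) * S_n n x.
Proof.
  unfold S_n. rewrite sum_upto_shift, Nat.sub_0_r, <- sum_upto_scal.
  simpl pow. f_equal; [unfold Rdiv; ring|].
  apply sum_upto_ext; intros k; simpl; unfold Rdiv; ring.
Qed.

Lemma S_n_ge0 (n : nat) (x : R) : x <= 1 -> 0 <= S_n n x.
Proof.
  intros Hx; induction n as [|n IH]; [unfold S_n; simpl; lra|].
  rewrite S_n_S.
  assert (0 < / INR (S n)) by (apply Rinv_0_lt_compat, lt_0_INR; lia).
  nra.
Qed.

Lemma S_n_le_1_add_ln (n : nat) (x : R) :
  0 <= x <= 1 -> (1 <= n)%nat -> S_n n x <= 1 + ln (INR n).
Proof.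
  intros Hx Hn; induction n as [|n IH]; [lia|].
  destruct n as [|n]; [unfold S_n; simpl; rewrite ln_1; lra|].
  specialize (IH ltac:(lia)).
  pose proof (S_n_ge0 (S n) x ltac:(lra)).
  pose proof (inv_succ_le_ln_succ_sub_ln (INR (S n)) ltac:(apply lt_0_INR; lia)).
  rewrite S_n_S, (S_INR (S n)).
  nra.
Qed.

Lemma inv_succ_add_contract_le (a x C : R) :
  0 < a -> 2 <= (a + 1) * x -> 2 <= C ->
  x / (a + 1) + (1 - x) * (C / a) <= C / (a + 1).
Proof.
  intros Ha Hx HC.
  assert (Hx0 : 0 < x) by nra.
  apply (Rmult_le_reg_r (a * (a + 1))); [nra|].
  field_simplify; [|lra|lra].
  (* i.e. C ((a+1) x - 1) >= a x, which follows from (C - 2) ((a+1) x - 2) >= 0 *)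
  nra.
Qed.

Section Scaled_sum_bound.

Variables (x C : R).
Hypothesis (Hx : 0 < x <= 1) (HC2 : 2 <= C) (HC : 2 * (1 + ln (2 / x)) <= C).

Lemma x_S_n_le_small (n : nat) :
  (1 <= n)%nat -> INR n * x <= 2 -> x * S_n n x <= C / INR n.
Proof.
  intros Hn Hnx.
  assert (Hpos : 0 < INR n) by (apply lt_0_INR; lia).
  assert (Hln0 : 0 <= ln (INR n)).
  { rewrite <- ln_1. apply ln_le; [lra|]. now apply (le_INR 1). }
  assert (Hln : ln (INR n) <= ln (2 / x)).
  { apply ln_le; [lra|]. apply (Rmult_le_reg_r x); [lra|].
    replace (2 / x * x) with 2 by (field; lra). lra. }
  pose proof (S_n_le_1_add_ln n x ltac:(lra) Hn).
  pose proof (S_n_ge0 n x ltac:(lra)).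
  apply (Rmult_le_reg_r (INR n)); [lra|].
  replace (C / INR n * INR n) with C by (field; lra).
  assert (INR n * x * (1 + ln (INR n)) <= 2 * (1 + ln (2 / x)))
    by (apply Rmult_le_compat; nra).
  nra.
Qed.

Lemma x_S_n_le (n : nat) : (1 <= n)%nat -> x * S_n n x <= C / INR n.
Proof.
  induction n as [|n IH]; intros Hn; [lia|].
  destruct (Rle_lt_dec (INR (S n) * x) 2) as [Hsmall | Hlarge].
  { now apply x_S_n_le_small. }
  destruct n as [|n]; [simpl in Hlarge; lra|].
  specialize (IH ltac:(lia)).
  rewrite S_n_S.
  rewrite (S_INR (S n)) in Hlarge |- *.
  pose proof (inv_succ_add_contract_le (INR (S n)) x C
                ltac:(apply lt_0_INR; lia) ltac:(lra) HC2).
  assert ((1 - x) * (x * S_n (S n) x) <= (1 - x) * (C / INR (S n)))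
    by (apply Rmult_le_compat_l; lra).
  replace (x * (/ (INR (S n) + 1) + (1 - x) * S_n (S n) x))
    with (x / (INR (S n) + 1) + (1 - x) * (x * S_n (S n) x)) by (unfold Rdiv; ring).
  lra.
Qed.

End Scaled_sum_bound.

Theorem lemma3 (x : R) (n : nat) (hx0 : 0 < x) (hx1 : x <= 1/4) (hn : (1 <= n)%nat) :
  x * S_n n x <= 7 * ln (1 / x) / INR n.
Proof.
  pose proof ln_lt_2.
  assert (Hln4 : 2 * ln 2 <= ln (1 / x)).
  { replace (2 * ln 2) with (ln (2 * 2)) by (rewrite ln_mult; lra).
    apply ln_le; [lra|]. apply (Rmult_le_reg_r x); [lra|].
    replace (1 / x * x) with 1 by (field; lra). lra. }
  assert (Hln2x : ln (2 / x) = ln 2 + ln (1 / x)).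
  { rewrite <- ln_mult by (try apply Rdiv_lt_0_compat; lra). f_equal; field; lra. }
  apply x_S_n_le; [lra | lra | rewrite Hln2x; lra | exact hn].
Qed.
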